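(* Let $d\ge 2$, set $b:=2^d$ and $Q:=[0,1]^d$, and let $(x_n)_{n\ge1}\subset Q$ be the dyadic digital sequence defined below. For every $N\in\mathbb{N}$ there exist pairwise disjoint Borel sets $A_1,\dots,A_N\subset Q$ such that \[ \lambda_d(A_n)=\frac1N,\qquad A_n\subset B\bigl(x_n,6\sqrt d\,N^{-1/d}\bigr)\qquad(1\le n\le N), \] and $\lambda_d\bigl(Q\setminus\bigcup_{n=1}^N A_n\bigr)=0$.
   Context: $\lambda_d$ denotes Lebesgue measure on $Q=[0,1]^d$ (a probability measure), and $B(x,r)$ is the closed Euclidean ball of radius $r$ centred at $x$. Dyadic digital sequence: for $a\in\{0,1,\dots,b-1\}$ write $a=\sum_{j=1}^d\varepsilon_j(a)2^{j-1}$ with $\varepsilon_j(a)\in\{0,1\}$; for an integer $m\ge0$ write its base-$b$ expansion $m=\sum_{k\ge0}a_k(m)b^k$ with $a_k(m)\in\{0,\dots,b-1\}$, all but finitely many zero. Then \[ x_n:=\Bigl(\sum_{k=0}^\infty\varepsilon_1(a_k(n-1))2^{-(k+1)},\ \dots,\ \sum_{k=0}^\infty\varepsilon_d(a_k(n-1))2^{-(k+1)}\Bigr),\qquad n\ge1. \] *)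

From HB Require Import structures.
From mathcomp Require Import all_boot all_order all_algebra.
From mathcomp Require Import all_classical all_reals all_analysis.
Set Implicit Arguments. Unset Strict Implicit. Unset Printing Implicit Defensive.
Import Order.TTheory GRing.Theory Num.Theory.
Local Open Scope classical_set_scope.
Local Open Scope ring_scope.

(* Points of R^d are d-tuples of reals; the measurable sets on d.-tuple R are
   the sigma-algebra generated by the coordinate maps, i.e. the Borel sets of R^d. *)

Definition cube (R : realType) (d : nat) : set (d.-tuple R) :=
  [set x | forall i : 'I_d, 0 <= tnth x i <= 1].

Arguments cube : clear implicits.

Definition cball (R : realType) (d : nat) (c : d.-tuple R) (r : R) : set (d.-tuple R) :=
  [set x | Num.sqrt (\sum_(i < d) (tnth x i - tnth c i) ^+ 2) <= r].

Definition box (R : realType) (d : nat) (a b : 'I_d -> R) : set (d.-tuple R) :=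
  [set x | forall i : 'I_d, a i <= tnth x i <= b i].

(* mu is d-dimensional Lebesgue measure (on Borel sets): it gives every box its
   volume.  By the pi-lambda uniqueness theorem this determines mu uniquely. *)
Definition is_lebesgue_d (R : realType) (d : nat)
    (mu : {measure set (d.-tuple R) -> \bar R}) : Prop :=
  forall a b : 'I_d -> R, (forall i, a i <= b i) ->
    mu (box a b) = (\prod_(i < d) (b i - a i))%:E.

Definition digit (d m k : nat) : nat := (m %/ (2 ^ d) ^ k) %% (2 ^ d).

(* eps_j(a) for j = i+1 : the (j-1)-th binary digit of a *)
Definition eps (i : nat) (a : nat) : bool := odd (a %/ 2 ^ i).

(* The dyadic digital sequence x_n, n >= 1 (coordinate j = i+1).  Digits
   a_k(n-1) vanish for k >= n-1, so the series is the finite sum over k < n. *)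
Definition digital_seq (R : realType) (d n : nat) : d.-tuple R :=
  [tuple of [seq \sum_(k < n) (eps i (digit d n.-1 k))%:R / 2%:R ^+ k.+1
            | i <- iota 0 d]].
Arguments digital_seq : clear implicits.

From HB Require Import structures.
From mathcomp Require Import all_boot all_order all_algebra.
From mathcomp Require Import all_classical all_reals all_analysis.
From mathcomp Require Import zify ring lra.
Import Order.TTheory GRing.Theory Num.Theory.
Set Implicit Arguments. Unset Strict Implicit. Unset Printing Implicit Defensive.

(* The cells are the leaves of a kd-tree that follows the binary digits of the
   indices: at level [l] each box is cut along coordinate [l mod d], the
   indices whose [l]-th bit is 0 going below the cut and the others above it,
   at the position that makes volumes proportional to the numbers of indices.
   After [N] levels every box holds a single index and has volume [1/N].
   Bit [k * d + c] of [n - 1] is bit [k] of coordinate [c] of [x_n], so each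
   box of the tree is a shifted copy of a dyadic box containing [x_n].  Cutting
   a box lying within [lam * 2 ^ l / N] of a dyadic interval of length [lam] at
   level [l] leaves both parts within [2 * lam * 2 ^ l / N] of the dyadic
   halves, and the cutting stops at the first level with [N < 2 ^ (l + 1)];
   this bounds every coordinate of [y - x_n], [y] in the cell of [x_n], by
   [6 N ^ (-1/d)]. *)

Lemma modn_pow2S (m l : nat) : m %% 2 ^ l.+1 = m %% 2 ^ l + eps l m * 2 ^ l.
Proof.
rewrite /eps; set p := 2 ^ l; have p0 : 0 < p by rewrite expn_gt0.
rewrite expnS mulnC -/p.
have E : m = (m %/ p)./2 * (p * 2) + (odd (m %/ p) * p + m %% p).
  have e1 := divn_eq m p.
  have e2 : m %/ p = odd (m %/ p) + (m %/ p)./2 * 2 by rewrite muln2 odd_double_half.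
  move: e1 e2; set q := m %/ p; set r := m %% p; set h := q./2; set o := odd q.
  move=> e1 e2; rewrite {1}e1 {1}e2; ring.
have rp : m %% p < p by rewrite ltn_pmod.
rewrite {1}E -divn2 modnMDl modn_small; first by rewrite addnC.
by case: (odd (m %/ p)); lia.
Qed.

Lemma eps_small (j m : nat) : m < 2 ^ j -> eps j m = false.
Proof. by move=> h; rewrite /eps divn_small. Qed.

Lemma eq_modn_pow2 (m m' k : nat) :
  (forall j, j < k -> eps j m = eps j m') -> m %% 2 ^ k = m' %% 2 ^ k.
Proof.
elim: k => [|k IH] H; first by rewrite expn0 !modn1.
by rewrite !modn_pow2S IH ?H // => j jk; apply: H; exact: ltnW.
Qed.

Lemma eps_neq (m m' : nat) : m != m' -> exists j, eps j m != eps j m'.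
Proof.
move=> /eqP ne; apply/not_existsP => H; apply: ne.
set K := maxn m m'.
have mK : m < 2 ^ K by apply: leq_ltn_trans (leq_maxl m m') (ltn_expl _ _).
have mK' : m' < 2 ^ K by apply: leq_ltn_trans (leq_maxr m m') (ltn_expl _ _).
rewrite -(modn_small mK) -(modn_small mK'); apply: eq_modn_pow2 => j _.
by apply/eqP/negPn/negP => h; apply: (H j).
Qed.

Lemma eps_digit (d m k i : nat) : i < d -> eps i (digit d m k) = eps (k * d + i) m.
Proof.
move=> id; rewrite /eps /digit -expnM (mulnC k d).
set q := m %/ 2 ^ (d * k).
have -> : m %/ 2 ^ (d * k + i) = q %/ 2 ^ i by rewrite expnD divnMA.
have e : 2 ^ d = 2 ^ (d - i) * 2 ^ i by rewrite -expnD subnK // ltnW.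
rewrite {2}(divn_eq q (2 ^ d)) [X in q %/ 2 ^ d * X]e mulnA divnMDl ?expn_gt0 //.
rewrite oddD oddM oddX /=.
have -> : (d - i == 0) = false by apply/negbTE; rewrite subn_eq0 -ltnNge.
by rewrite andbF.
Qed.

(* [cell_count N m l] is the number of indices [m' < N] congruent to [m]
   modulo [2 ^ l], i.e. the ceiling of [(N - m %% 2 ^ l) / 2 ^ l]. *)
Fixpoint cell_count (N m l : nat) : nat :=
  if l is l'.+1 then
    if eps l' m then (cell_count N m l')./2 else uphalf (cell_count N m l')
  else N.

Section CellCount.
Variables (N m : nat).
Hypothesis m_lt_N : m < N.

Lemma cell_count_bounds (l : nat) :
  N - m %% 2 ^ l <= cell_count N m l * 2 ^ l < N - m %% 2 ^ l + 2 ^ l.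
Proof.
have mN := m_lt_N.
elim: l => [|l /andP[IH1 IH2]]; first by rewrite /= expn0 modn1 subn0 muln1; lia.
have sm : m %% 2 ^ l.+1 <= m by apply: leq_mod.
move: sm; rewrite /= modn_pow2S expnS.
set p := 2 ^ l; set s := m %% p; set C := cell_count N m l.
have p0 : 0 < p by rewrite expn_gt0.
have sp : s < p by rewrite ltn_pmod.
have sm : s <= m by apply: leq_mod.
move: IH1 IH2; rewrite -/p -/s -/C.
have HC : C = odd C + C./2 * 2 by rewrite muln2 odd_double_half.
have HU : uphalf C = odd C + C./2 by rewrite uphalf_half.
case: (eps l m) => /=; rewrite ?HU; move: HC; set x := C./2; set o := odd C.
  by case: o => /= -> ; rewrite !mulnDl; nia.
by case: o => /= -> ; rewrite ?mulnDl; nia.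
Qed.

Lemma cell_count_gt0 (l : nat) : 0 < cell_count N m l.
Proof.
have /andP[h1 h2] := cell_count_bounds l; have sm : m %% 2 ^ l <= m by apply: leq_mod.
have := m_lt_N; by case: (cell_count N m l) h1 => //; rewrite mul0n; lia.
Qed.

Lemma cell_count_lt (l : nat) : N < (cell_count N m l).+1 * 2 ^ l.
Proof.
have /andP[h1 h2] := cell_count_bounds l.
have sp : m %% 2 ^ l < 2 ^ l by rewrite ltn_pmod // expn_gt0.
by rewrite mulSn; lia.
Qed.

Lemma cell_count_le1 (l : nat) : cell_count N m l <= 1 -> N < 2 ^ l.+1.
Proof.
move=> c1; have /andP[h1 h2] := cell_count_bounds l.
have : cell_count N m l * 2 ^ l <= 2 ^ l.
  by rewrite -{2}(mul1n (2 ^ l)) leq_mul2r c1 orbT.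
by rewrite expnS; lia.
Qed.

Lemma cell_count_gt1 (l : nat) : 1 < cell_count N m l -> 2 ^ l < N.
Proof.
move=> c2; have /andP[h1 h2] := cell_count_bounds l.
have : 2 * 2 ^ l <= cell_count N m l * 2 ^ l by rewrite leq_mul2r c2 orbT.
have sm : m %% 2 ^ l <= m by apply: leq_mod.
have := m_lt_N; lia.
Qed.

Lemma cell_countN : cell_count N m N = 1.
Proof.
have p := cell_count_gt0 N; have /andP[h1 h2] := cell_count_bounds N.
have hN : N < 2 ^ N by apply: ltn_expl.
by case: (cell_count N m N) p h2 => [|[|k]] //= _; rewrite !mulSn; lia.
Qed.

Lemma cell_count_stable (l : nat) :
  cell_count N m l <= 1 -> cell_count N m l.+1 = cell_count N m l.
Proof.
move=> c1; have p0 := cell_count_gt0 l; have p1 := cell_count_gt0 l.+1.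
have e : cell_count N m l = 1 by lia.
by move: p1; rewrite /= e; case: (eps l m).
Qed.

End CellCount.

Lemma eq_cell_count (N m m' l : nat) :
  (forall j, j < l -> eps j m = eps j m') -> cell_count N m l = cell_count N m' l.
Proof.
elim: l => [//|l IH] H /=.
by rewrite H // IH // => j jl; apply: H; exact: ltnW.
Qed.

Definition splits (d l c : nat) : nat := count (fun j => j %% d == c) (iota 0 l).

Lemma splitsS (d l c : nat) : splits d l.+1 c = (splits d l c + (l %% d == c)).
Proof. by rewrite /splits -addn1 iotaD count_cat /= add0n addn0. Qed.

Lemma divn_eq_of_bounds (d l c n : nat) : (0 < d) -> (l %% d = c) ->
  (l <= n * d + c) -> (0 < n -> n.-1 * d + c < l) -> n = (l %/ d).
Proof.
move=> d0 E h1 h2; have El : l = (l %/ d * d + c) by rewrite {1}(divn_eq l d) E.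
move: El h1 h2; set q := (l %/ d) => El h1 h2.
apply/eqP; rewrite eqn_leq; apply/andP; split.
  case: n h1 h2 => [//|n] h1 /(_ isT) /= h.
  by rewrite -(ltn_pmul2r d0); lia.
by rewrite -(leq_pmul2r d0); lia.
Qed.

Lemma splits_bounds (d l c : nat) : (0 < d) -> (c < d) ->
  (l <= splits d l c * d + c) /\ (0 < splits d l c -> (splits d l c).-1 * d + c < l).
Proof.
move=> d0 cd; elim: l => [|l [IH1 IH2]]; first by rewrite /splits.
rewrite splitsS; case: eqP => [E|E].
  have El : l = (l %/ d * d + c) by rewrite {1}(divn_eq l d) E.
  by rewrite (divn_eq_of_bounds d0 E IH1 IH2) addn1 /=; split; lia.
rewrite addn0; split => [|/IH2]; last by lia.
have : l != (splits d l c * d + c).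
  by apply/eqP => h; apply: E; rewrite h modnMDl modn_small.
lia.
Qed.

Lemma splits_at (d l c : nat) : (0 < d) -> (c < d) -> (l %% d = c) ->
  (splits d l c * d + c) = l.
Proof.
move=> d0 cd E; have [h1 h2] := splits_bounds l d0 cd.
by rewrite (divn_eq_of_bounds d0 E h1 h2) {2}(divn_eq l d) E.
Qed.

Local Open Scope classical_set_scope.
Local Open Scope ring_scope.

Section Boxes.
Variables (R : realType) (d : nat).

Definition hbox (a b : 'I_d -> R) : set (d.-tuple R) :=
  [set x | forall i : 'I_d, a i <= tnth x i < b i].

Lemma measurable_coord_prod (I : 'I_d -> set R) : (forall i, measurable (I i)) ->
  measurable [set x : d.-tuple R | forall i, I i (tnth x i)].
Proof.
move=> mI; rewrite (_ : [set x | _] = \bigcap_(i in [set: 'I_d]) ((fun x : d.-tuple R => tnth x i) @^-1` I i)).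
  apply: fin_bigcap_measurable; first exact: finite_finset.
  by move=> i _; rewrite -[X in measurable X]setTI; apply: measurable_tnth.
by apply/seteqP; split => x /= H i; [move=> _|]; apply: H.
Qed.

Lemma measurable_box (a b : 'I_d -> R) : measurable (box a b).
Proof.
rewrite (_ : box a b = [set x | forall i, [set` `[a i, b i]] (tnth x i)]).
  by apply: (@measurable_coord_prod (fun i => [set` _])) => i; apply: measurable_itv.
by apply/seteqP; split => x /= H i; move: (H i); rewrite /= in_itv.
Qed.

Lemma measurable_hbox (a b : 'I_d -> R) : measurable (hbox a b).
Proof.
rewrite (_ : hbox a b = [set x | forall i, [set` `[a i, b i[] (tnth x i)]).
  by apply: (@measurable_coord_prod (fun i => [set` _])) => i; apply: measurable_itv.
by apply/seteqP; split => x /= H i; move: (H i); rewrite /= in_itv.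
Qed.

Lemma hbox_measure (mu : {measure set (d.-tuple R) -> \bar R}) (a b : 'I_d -> R) :
  is_lebesgue_d mu -> (forall i, a i <= b i) ->
  mu (hbox a b) = (\prod_(i < d) (b i - a i))%:E.
Proof.
move=> Hmu ab.
pose face (i : 'I_d) := box (fun j => if j == i then b i else a j) b.
have face0 i : mu (face i) = 0%E.
  rewrite /face Hmu; last by move=> j; case: eqP => [->|].
  by rewrite (bigD1 i) //= eqxx subrr mul0r.
have faces : box a b `\` hbox a b `<=` \bigcup_(i in [set: 'I_d]) face i.
  move=> x [/= xb xh]; have [i Hi] : exists i, ~ (a i <= tnth x i < b i).
    by apply/not_existsP => H; apply: xh => i; apply: contrapT; exact: H.
  exists i => // j; case: eqP => [->|_]; last exact: xb.
  have /andP[h1 h2] := xb i; rewrite h2 andbT leNgt.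
  by apply/negP => h; apply: Hi; rewrite h1 h.
have null_rim : mu (box a b `\` hbox a b) = 0%E.
  have sum0 : (\sum_(i \in [set: 'I_d]) mu (face i) = 0)%E.
    by apply: fsbig1 => i _; exact: face0.
  apply/eqP; rewrite eq_le measure_ge0 andbT -sum0.
  apply: content_sub_fsum faces => //; first exact: finite_finset.
    by move=> i _; apply: measurable_box.
  by apply: measurableD; [apply: measurable_box|apply: measurable_hbox].
have split_box : mu (box a b) = (mu (box a b `\` hbox a b) + mu (box a b `&` hbox a b))%E
  := measureDI mu (measurable_box a b) (measurable_hbox a b).
rewrite -Hmu // split_box null_rim add0e; congr (mu _); apply/seteqP; split => x; last by case.
by move=> H; split => // i; have /andP[h1 h2] := H i; rewrite h1 (ltW h2).
Qed.

End Boxes.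

Lemma prod_scale_at (R : comRingType) (d : nat) (i0 : 'I_d) (F G : 'I_d -> R) (r : R) :
  (forall i, i != i0 -> G i = F i) -> G i0 = F i0 * r ->
  \prod_(i < d) G i = (\prod_(i < d) F i) * r.
Proof.
move=> GF G0; rewrite (bigD1 i0) //= [in RHS](bigD1 i0) //= G0.
by rewrite (eq_bigr F) => [|i /GF //]; rewrite -mulrA (mulrC r) mulrA.
Qed.

Section KdCells.
Variables (R : realType) (d N : nat).

Definition cut_frac (C : nat) : R := (uphalf C)%:R / C%:R.

Lemma cut_between (a b : R) (C : nat) : (0 < C)%N -> a <= b ->
  a <= a + (b - a) * cut_frac C <= b.
Proof.
move=> C0 ab; have f0 : 0 <= cut_frac C by rewrite divr_ge0.
have f1 : cut_frac C <= 1.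
  rewrite ler_pdivrMr ?ltr0n // mul1r ler_nat.
  by case: C {f0} C0 => // C _; rewrite uphalf_half /=; case: (odd C); lia.
rewrite lerDl mulr_ge0 ?subr_ge0 //= -lerBrDl -[leRHS]mulr1 ler_wpM2l //.
by rewrite subr_ge0.
Qed.

(* Level [l] cuts coordinate [l %% d] of a box containing [C > 1] indices at
   the fraction [cut_frac C] of its side: the [uphalf C] indices with bit [l]
   equal to 0 get the lower part, the [C./2] others the upper part. *)
Fixpoint kd_bounds (m l : nat) : ('I_d -> R) * ('I_d -> R) :=
  match l with
  | 0 => (fun _ => 0, fun _ => 1)
  | l'.+1 =>
    let ab := kd_bounds m l' in
    let C := cell_count N m l' in
    if (1 < C)%N then
      let t i := ab.1 i + (ab.2 i - ab.1 i) * cut_frac C in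
      if eps l' m then (fun i : 'I_d => if nat_of_ord i == (l' %% d)%N then t i else ab.1 i, ab.2)
      else (ab.1, fun i : 'I_d => if nat_of_ord i == (l' %% d)%N then t i else ab.2 i)
    else ab
  end.

Definition kd_cell (m l : nat) : set (d.-tuple R) :=
  hbox (kd_bounds m l).1 (kd_bounds m l).2.

Lemma kd_bounds_valid (m l : nat) (i : 'I_d) :
  [/\ 0 <= (kd_bounds m l).1 i, (kd_bounds m l).1 i <= (kd_bounds m l).2 i
    & (kd_bounds m l).2 i <= 1].
Proof.
elim: l => [|l [IH1 IH2 IH3]] /=; first by rewrite lexx ler01.
case: ifP => // C1; have /andP[t1 t2] := cut_between (ltnW C1) IH2.
by case: ifP => _ /=; case: ifP => _ /=; split; lra.
Qed.

Lemma kd_bounds_mono (m l : nat) (i : 'I_d) :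
  (kd_bounds m l).1 i <= (kd_bounds m l.+1).1 i /\
  (kd_bounds m l.+1).2 i <= (kd_bounds m l).2 i.
Proof.
have [_ v _] := kd_bounds_valid m l i.
rewrite /=; case: ifP => C1; last by rewrite !lexx.
have /andP[t1 t2] := cut_between (ltnW C1) v.
by case: ifP => _ /=; case: ifP => _ /=; rewrite ?lexx.
Qed.

Lemma kd_cell_nested (m l k : nat) : (l <= k)%N -> kd_cell m k `<=` kd_cell m l.
Proof.
move=> /subnKC <-; elim: (k - l)%N => [|j IH]; first by rewrite addn0.
move=> x Hx; apply: IH => i; have /andP[h1 h2] := Hx i.
have [m1 m2] := kd_bounds_mono m (l + j) i; rewrite addnS in h1 h2.
by rewrite (le_trans m1 h1) (lt_le_trans h2 m2).
Qed.

Lemma kd_cell_sub_cube (m l : nat) : kd_cell m l `<=` cube R d.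
Proof.
move=> y Hy i; have /andP[h1 h2] := Hy i; have [v1 _ v3] := kd_bounds_valid m l i.
by rewrite (le_trans v1 h1) (le_trans (ltW h2) v3).
Qed.

Lemma eq_kd_bounds (m m' l : nat) :
  (forall j, (j < l)%N -> eps j m = eps j m') -> kd_bounds m l = kd_bounds m' l.
Proof.
elim: l => [//|l IH] H /=.
rewrite H // (@eq_cell_count N m m' l) => [|j jl]; last by apply: H; exact: ltnW.
by rewrite IH // => j jl; apply: H; exact: ltnW.
Qed.

Lemma kd_bounds_stable (m l : nat) : (m < N)%N -> (cell_count N m l <= 1)%N ->
  forall k, kd_bounds m (l + k) = kd_bounds m l.
Proof.
move=> mN c1; elim => [|k IH]; first by rewrite addn0.
have ck : cell_count N m (l + k) = cell_count N m l.
  elim: k {IH} => [|k IHk]; first by rewrite addn0.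
  by rewrite addnS cell_count_stable // IHk.
by rewrite addnS /= ck ltnNge c1 /= IH.
Qed.

Lemma kd_volume (m l : nat) : (0 < d)%N -> (m < N)%N ->
  \prod_(i < d) ((kd_bounds m l).2 i - (kd_bounds m l).1 i) = (cell_count N m l)%:R / N%:R.
Proof.
move=> d0 mN; have NR : N%:R != 0 :> R by rewrite pnatr_eq0 -lt0n (leq_ltn_trans _ mN).
elim: l => [|l IH].
  by rewrite /= big1 ?divff // => i _; rewrite subr0.
have [C1|C1] := ltnP 1 (cell_count N m l); last first.
  by rewrite (cell_count_stable mN C1) -IH -[l.+1]addn1 kd_bounds_stable.
pose i0 : 'I_d := Ordinal (ltn_pmod l d0).
have CR : (cell_count N m l)%:R != 0 :> R by rewrite pnatr_eq0 -lt0n ltnW.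
have HC : cell_count N m l = (uphalf (cell_count N m l) + (cell_count N m l)./2)%N.
  by rewrite uphalf_half -addnA addnn -[in LHS](odd_double_half (cell_count N m l)).
have at_i0 i : i != i0 -> (nat_of_ord i == (l %% d)%N) = false.
  by move/negbTE; rewrite -(inj_eq val_inj).
move: IH; rewrite /= C1 /cut_frac; case: (kd_bounds m l) => a b /= IH.
case: (eps l m) => /=.
- rewrite (@prod_scale_at _ _ i0 (fun i => b i - a i) _
           ((cell_count N m l)./2%:R / (cell_count N m l)%:R)).
  + by rewrite IH; field; rewrite NR CR.
  + by move=> i /at_i0 /= ->.
  + rewrite /= eqxx; move: HC CR; set C := cell_count N m l.
    set U := uphalf C; set h := C./2; by move=> HC CR; rewrite HC natrD in CR *; field.
- rewrite (@prod_scale_at _ _ i0 (fun i => b i - a i) _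
           ((uphalf (cell_count N m l))%:R / (cell_count N m l)%:R)).
  + by rewrite IH; field; rewrite NR CR.
  + by move=> i /at_i0 /= ->.
  + by rewrite /= eqxx addrC addKr.
Qed.

Lemma kd_cell_disjoint_at (m m' j : nat) : (0 < d)%N ->
  kd_bounds m j = kd_bounds m' j -> cell_count N m j = cell_count N m' j ->
  (1 < cell_count N m j)%N -> eps j m -> ~~ eps j m' ->
  kd_cell m j.+1 `&` kd_cell m' j.+1 = set0.
Proof.
move=> d0 E Ec C1 b1 /negbTE b2; pose i0 : 'I_d := Ordinal (ltn_pmod j d0).
rewrite /kd_cell /= -Ec -E C1 b1 b2 /=.
apply/seteqP; split => // x [/= H1 H2].
have /andP[_ h1] := H2 i0; have /andP[h2 _] := H1 i0; move: h1 h2; rewrite /= eqxx.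
by move=> h1 h2; have := lt_le_trans h1 h2; rewrite ltxx.
Qed.

Lemma kd_cell_disjoint (m m' : nat) : (0 < d)%N -> (m < N)%N -> (m' < N)%N ->
  m != m' -> kd_cell m N `&` kd_cell m' N = set0.
Proof.
move=> d0 mN mN' ne.
have [j Pj minj] := ex_minnP (eps_neq ne).
have agree i : (i < j)%N -> eps i m = eps i m'.
  by move=> ij; apply/eqP/negP => /negP /minj; rewrite leqNgt ij.
have jN : (j < N)%N.
  rewrite ltnNge; apply/negP => Nj; move: Pj.
  have hN : (N < 2 ^ j)%N by apply: (leq_ltn_trans Nj); apply: ltn_expl.
  by rewrite !eps_small ?(ltn_trans mN) ?(ltn_trans mN').
have E := eq_kd_bounds agree; have Ec := eq_cell_count N agree.
have C1 : (1 < cell_count N m j)%N.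
  have p1 := cell_count_gt0 mN j.+1; have p2 := cell_count_gt0 mN' j.+1.
  move: p1 p2 Pj; rewrite /= Ec.
  by case: (eps j m); case: (eps j m'); case: (cell_count N m' j) => [|[|k]].
have sub mm : kd_cell mm N `<=` kd_cell mm j.+1 by apply: kd_cell_nested.
apply/seteqP; split => // x [h1 h2].
move: Pj; case Eb: (eps j m); case Eb': (eps j m') => // _.
  by rewrite -(kd_cell_disjoint_at d0 E Ec C1 Eb (negbT Eb')); split; apply: sub.
rewrite Ec in C1.
by rewrite -(kd_cell_disjoint_at d0 (esym E) (esym Ec) C1 Eb' (negbT Eb)); split; apply: sub.
Qed.

End KdCells.

Lemma cut_near_midpoint (R : realFieldType) (a b lo lam g w C U : R) :
  0 <= a - lo <= g -> 0 <= b - lo - lam <= g -> g <= lam * w -> 0 < lam -> 0 < w ->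
  a <= b -> 2 <= C -> 1 < (C + 1) * w -> C <= 2 * U -> 2 * U <= C + 1 ->
  0 <= a + (b - a) * (U / C) - (lo + lam / 2) <= 2 * (lam * w).
Proof.
move=> /andP[e0 e1] /andP[f0 f1] glw lam0 w0 ab C2 Cw U1 U2.
have C0 : 0 < C by lra.
set del := U / C - 2^-1.
have d0 : 0 <= del by rewrite /del subr_ge0 ler_pdivlMr //; lra.
have d1 : del * (2 * C) <= 1.
  have -> : del * (2 * C) = 2 * U - C by rewrite /del; field; rewrite gt_eqF.
  lra.
have -> : a + (b - a) * (U / C) - (lo + lam / 2) =
    ((a - lo) + (b - lo - lam)) / 2 + (b - a) * del.
  by rewrite /del; field; rewrite gt_eqF.
apply/andP; split.
  by apply: addr_ge0; [apply: divr_ge0; lra | apply: mulr_ge0; lra].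
have h2 : (b - a) * del <= (lam + lam * w) * del by apply: ler_wpM2r => //; lra.
have h4 : lam + lam * w <= lam * w * (2 * C).
  have h : 1 + w <= w * (2 * C) by nra.
  by rewrite -mulrA; have := ler_wpM2l (ltW lam0) h; rewrite mulrDr mulr1.
have h5 : (lam + lam * w) * del <= lam * w.
  rewrite -(ler_pM2r (_ : 0 < 2 * C)); last by lra.
  have : (lam + lam * w) * (del * (2 * C)) <= lam + lam * w.
    by rewrite -[leRHS]mulr1 ler_wpM2l //; apply: addr_ge0; [lra|apply: mulr_ge0; lra].
  rewrite mulrA; lra.
lra.
Qed.

Lemma cut_near_dyadic (R : realFieldType) (a b lo lam g w C U : R) (bit : bool) :
  0 <= a - lo <= g -> 0 <= b - lo - lam <= g -> g <= lam * w -> 0 < lam -> 0 < w ->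
  a <= b -> 2 <= C -> 1 < (C + 1) * w -> C <= 2 * U -> 2 * U <= C + 1 ->
  let t := a + (b - a) * (U / C) in
  let lo' := lo + bit%:R * (lam / 2) in
  0 <= (if bit then t else a) - lo' <= 2 * (lam * w) /\
  0 <= (if bit then b else t) - lo' - lam / 2 <= 2 * (lam * w).
Proof.
move=> ha hb glw lam0 w0 ab C2 Cw U1 U2 /=.
have /andP[t0 t1] := cut_near_midpoint ha hb glw lam0 w0 ab C2 Cw U1 U2.
move: ha hb; case: bit => /andP[a0 a1] /andP[b0 b1] /=;
  by rewrite ?mul1r ?mul0r ?addr0; split; apply/andP; split; lra.
Qed.

Lemma mul_pow1D_le_six (R : realFieldType) (d : nat) (A t : R) : (0 < d)%N ->
  0 < A -> 0 < t -> t < 4 -> A <= 2 ^+ d -> A * t <= 2 -> A * (1 + t) ^+ d <= 6 ^+ d.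
Proof.
move=> d0 A0 t0 t4 A2 At.
have e6 : (6 : R) ^+ d = 2 ^+ d * 3 ^+ d by rewrite -exprMn; congr (_ ^+ _); lra.
have p2 : 2 <= (2 : R) ^+ d by rewrite -[X in X <= _]expr1 ler_eXn2l //; lra.
have [t2|t2] := leP 2 t.
  have At2 : A * 2 <= A * t by rewrite ler_wpM2l // ltW.
  have A1 : A <= 1 by lra.
  have h : (1 + t) ^+ d <= 6 ^+ d by apply: lerXn2r; rewrite ?nnegrE; lra.
  by rewrite -[leRHS]mul1r; apply: ler_pM; [lra | apply: exprn_ge0; lra | lra | exact: h].
have [t1|t1] := leP 1 t.
  have At1 : A * 1 <= A * t by rewrite ler_wpM2l // ltW.
  have A1 : A <= 2 by lra.
  have h : (1 + t) ^+ d <= 3 ^+ d by apply: lerXn2r; rewrite ?nnegrE; lra.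
  by rewrite e6; apply: ler_pM; [lra | apply: exprn_ge0; lra | lra | exact: h].
have h : (1 + t) ^+ d <= 2 ^+ d by apply: lerXn2r; rewrite ?nnegrE; lra.
have h3 : (2 : R) ^+ d <= 3 ^+ d by apply: lerXn2r; rewrite ?nnegrE; lra.
by rewrite e6; apply: ler_pM; [lra | apply: exprn_ge0; lra | lra | lra].
Qed.

Lemma le_scaled_root (R : realType) (d N : nat) (D K : R) : (0 < d)%N -> (0 < N)%N ->
  0 <= D -> 0 <= K -> N%:R * D ^+ d <= K ^+ d -> D <= K * N%:R `^ (- d%:R^-1).
Proof.
move=> d0 N0 D0 K0 H; have NR : 0 < N%:R :> R by rewrite ltr0n.
have root : (N%:R `^ (- d%:R^-1) : R) ^+ d = N%:R^-1.
  rewrite -powR_mulrn ?powR_ge0 // -powRrM mulNr mulVf ?pnatr_eq0 -?lt0n //.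
  by rewrite powR_inv1 // ler0n.
rewrite -(ler_pXn2r d0) ?nnegrE ?mulr_ge0 ?powR_ge0 // exprMn root.
by rewrite ler_pdivlMr // mulrC.
Qed.

Lemma cball_of_coord_bound (R : realType) (d : nat) (y c : d.-tuple R) (r : R) :
  0 <= r -> (forall i : 'I_d, `|tnth y i - tnth c i| <= r) ->
  cball c (Num.sqrt d%:R * r) y.
Proof.
move=> r0 H; rewrite /cball /=.
have h : \sum_(i < d) (tnth y i - tnth c i) ^+ 2 <= \sum_(i < d) r ^+ 2.
  apply: ler_sum => i _; rewrite -real_normK ?num_real //.
  by apply: lerXn2r; rewrite ?nnegrE ?normr_ge0.
apply: (le_trans (ler_wsqrtr h)).
by rewrite sumr_const card_ord -[_ *+ d]mulr_natl sqrtrM ?ler0n // sqrtr_sqr ger0_norm.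
Qed.

Section DyadicDrift.
Variables (R : realType) (d N : nat).
Hypothesis d_gt1 : (1 < d)%N.

Let d_gt0 : (0 < d)%N := ltnW d_gt1.

Definition dyadic_corner (m c n : nat) : R :=
  \sum_(k < n) (eps (k * d + c) m)%:R / 2 ^+ k.+1.

Lemma dyadic_cornerS (m c n : nat) :
  dyadic_corner m c n.+1 = dyadic_corner m c n + (eps (n * d + c) m)%:R / 2 ^+ n.+1.
Proof. by rewrite /dyadic_corner big_ord_recr. Qed.

(* After [n.+1] cuts along [c], the last one at level [l = n * d + c], this is
   [2 * 2 ^- n * 2 ^ l / N], the bound given by [cut_near_dyadic]. *)
Definition drift (l c : nat) : R :=
  if splits d l c is n.+1 then 2 * 2 ^+ (n * (d - 1) + c) / N%:R else 0.

Definition near_dyadic (m l : nat) : Prop := forall c : 'I_d,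
  0 <= (kd_bounds R d N m l).1 c - dyadic_corner m c (splits d l c) <= drift l c /\
  0 <= (kd_bounds R d N m l).2 c - dyadic_corner m c (splits d l c)
         - (2 ^+ splits d l c)^-1 <= drift l c.

Lemma drift_ge0 (l c : nat) : 0 <= drift l c.
Proof. by rewrite /drift; case: splits => // n; rewrite !mulr_ge0 ?exprn_ge0. Qed.

Lemma driftS_other (l c : nat) : (l %% d != c)%N -> drift l.+1 c = drift l c.
Proof. by rewrite /drift splitsS => /negbTE ->; rewrite addn0. Qed.

Lemma split_scale (l c : nat) : (c < d)%N -> (l %% d = c)%N ->
  (2 ^+ splits d l c)^-1 * (2 ^+ l / N%:R) = 2 ^+ (splits d l c * (d - 1) + c) / N%:R :> R.
Proof.
move=> cd Ec; have := splits_at d_gt0 cd Ec; set n := splits d l c => Hl.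
rewrite mulrA; congr (_ / _); rewrite -Hl.
have -> : (n * d + c = n * (d - 1) + c + n)%N.
  have : (n <= n * d)%N by rewrite leq_pmulr.
  by rewrite mulnBr muln1; lia.
by rewrite exprD mulrCA mulVf ?mulr1 // expf_neq0.
Qed.

Lemma driftS_split (l c : nat) : (c < d)%N -> (l %% d = c)%N ->
  drift l.+1 c = 2 * ((2 ^+ splits d l c)^-1 * (2 ^+ l / N%:R)).
Proof.
by move=> cd Ec; rewrite split_scale // /drift splitsS Ec eqxx addn1 mulrA.
Qed.

Lemma drift_le_split (l c : nat) : (0 < N)%N -> (c < d)%N -> (l %% d = c)%N ->
  drift l c <= (2 ^+ splits d l c)^-1 * (2 ^+ l / N%:R).
Proof.
move=> N0 cd Ec; rewrite split_scale // /drift.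
case: (splits d l c) => [|n]; first by rewrite divr_ge0 // exprn_ge0.
rewrite ler_pM2r ?invr_gt0 ?ltr0n // mulrC.
have -> : (n.+1 * (d - 1) + c = (n * (d - 1) + c) + (d - 1))%N by rewrite mulSn; lia.
rewrite [leRHS]exprD ler_pM2l ?exprn_gt0 // -natrX ler_nat.
by rewrite -[X in (X <= _)%N]expn1 leq_pexp2l //; lia.
Qed.

Lemma cut_count_facts (m l : nat) : (m < N)%N -> (1 < cell_count N m l)%N ->
  let C := cell_count N m l in
  [/\ 2 <= C%:R :> R, C%:R <= 2 * (uphalf C)%:R :> R,
      2 * (uphalf C)%:R <= C%:R + 1 :> R & 1 < (C%:R + 1) * ((2 ^+ l : R) / N%:R)].
Proof.
move=> mN C1 C; have N0 : 0 < N%:R :> R by rewrite ltr0n (leq_ltn_trans _ mN).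
have /andP[U1 U2] : (C <= 2 * uphalf C <= C.+1)%N.
  rewrite uphalf_half; move: (odd_double_half C); set h := C./2.
  by case: (odd C) => /= E; rewrite -addnn in E; apply/andP; split; lia.
split; rewrite -?natrM ?natr1 ?ler_nat //.
rewrite mulrA ltr_pdivlMr // mul1r -natrX ?natr1 -natrM ltr_nat.
by have := cell_count_lt mN l; rewrite mulSn addnC mulnC.
Qed.

Lemma near_dyadic_step (m l : nat) : (m < N)%N -> (1 < cell_count N m l)%N ->
  near_dyadic m l -> near_dyadic m l.+1.
Proof.
move=> mN C1 IH c; have [_ ab _] := @kd_bounds_valid R d N m l c.
have [IHa IHb] := IH c; move: IHa IHb ab.
have [Ec|Ec] := eqVneq (l %% d)%N c; last first.
  rewrite /= C1 driftS_other // splitsS (negbTE Ec) addn0.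
  by case: (eps l m) => /=; rewrite eq_sym (negbTE Ec).
rewrite driftS_split // /= C1; case: (kd_bounds R d N m l) => a b /= IHa IHb ab.
have N0 : (0 < N)%N by apply: leq_ltn_trans mN.
have [C2 CU1 CU2 Cw] := cut_count_facts mN C1.
have := splits_at d_gt0 (ltn_ord c) Ec; set n := splits d l c => Hl.
set lam : R := (2 ^+ n)^-1.
have lam0 : 0 < lam by rewrite invr_gt0 exprn_gt0.
have w0 : 0 < (2 ^+ l : R) / N%:R by rewrite divr_gt0 ?exprn_gt0 ?ltr0n.
have lam2 : (2 ^+ n.+1 : R)^-1 = lam / 2 by rewrite exprS invfM mulrC.
have := cut_near_dyadic (eps l m) IHa IHb (drift_le_split N0 (ltn_ord c) Ec)
  lam0 w0 ab C2 Cw CU1 CU2.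
rewrite splitsS Ec eqxx addn1 dyadic_cornerS Hl lam2 /cut_frac.
by case: (eps l m) => /= h; rewrite eqxx; exact: h.
Qed.

Lemma near_dyadic_active (m l : nat) : (m < N)%N ->
  (forall j, (j < l)%N -> (1 < cell_count N m j)%N) -> near_dyadic m l.
Proof.
move=> mN; elim: l => [|l IH] act.
  by move=> c; rewrite /drift /splits /dyadic_corner /= big_ord0 expr0 invr1 !subr0 subrr lexx.
by apply: near_dyadic_step => //; [exact: act | apply: IH => j jl; apply: act; exact: ltnW].
Qed.

Lemma tnth_digital_seq (m : nat) (c : 'I_d) :
  tnth (digital_seq R d m.+1) c = dyadic_corner m c m.+1.
Proof.
rewrite /digital_seq (tnth_nth 0) /= (nth_map 0) ?size_iota // nth_iota // add0n.
by apply: eq_bigr => k _; rewrite eps_digit.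
Qed.

Lemma dyadic_corner_mono (m c n k : nat) :
  dyadic_corner m c n <= dyadic_corner m c (n + k) <=
  dyadic_corner m c n + (2 ^+ n)^-1 - (2 ^+ (n + k))^-1.
Proof.
elim: k => [|k IH]; first by rewrite addn0 addrK lexx.
rewrite addnS dyadic_cornerS.
have -> : (2 ^+ (n + k).+1 : R)^-1 = (2 ^+ (n + k))^-1 / 2 by rewrite exprS invfM mulrC.
have q0 : 0 < (2 ^+ (n + k) : R)^-1 by rewrite invr_gt0 exprn_gt0.
have b01 : 0 <= (eps ((n + k) * d + c) m)%:R :> R /\ (eps ((n + k) * d + c) m)%:R <= 1 :> R.
  by case: (eps _ m); rewrite /= ?ler01 ?lexx.
move: IH b01 q0; set q := (2 ^+ (n + k))^-1; set e := (eps _ _)%:R.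
move=> /andP[h1 h2] [e0 e1] q0.
have : 0 <= e * (q / 2) <= q / 2.
  by rewrite mulr_ge0 ?divr_ge0 ?(ltW q0) //= ler_piMl // divr_ge0 // ltW.
by move=> /andP[h3 h4]; apply/andP; split; lra.
Qed.

Lemma dyadic_corner_stable (m c k : nat) :
  dyadic_corner m c (m.+1 + k) = dyadic_corner m c m.+1.
Proof.
elim: k => [|k IH]; first by rewrite addn0.
rewrite addnS dyadic_cornerS IH eps_small ?mul0r ?addr0 //.
apply: (leq_trans (ltn_expl m (isT : (1 < 2)%N))); rewrite leq_pexp2l //.
by apply: (leq_trans _ (leq_addr _ _)); apply: (leq_trans _ (leq_pmulr _ d_gt0)); lia.
Qed.

Lemma digital_seq_near_corner (m : nat) (c : 'I_d) (n : nat) :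
  dyadic_corner m c n <= tnth (digital_seq R d m.+1) c <= dyadic_corner m c n + (2 ^+ n)^-1.
Proof.
rewrite tnth_digital_seq; have [nm|mn] := leqP n m.+1.
  have := dyadic_corner_mono m c n (m.+1 - n); rewrite subnKC //.
  have : 0 <= (2 ^+ m.+1 : R)^-1 by rewrite invr_ge0 exprn_ge0.
  by move=> h /andP[h1 h2]; apply/andP; split; lra.
rewrite -(subnKC (ltnW mn)) dyadic_corner_stable.
by rewrite lexx lerDl invr_ge0 exprn_ge0.
Qed.

Lemma drift_radius (lf : nat) (c : 'I_d) : (0 < N)%N -> (N < 2 ^ lf.+1)%N ->
  (forall j, (j < lf)%N -> (2 ^ j < N)%N) ->
  N%:R * ((2 ^+ splits d lf c)^-1 + drift lf c) ^+ d <= 6 ^+ d.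
Proof.
move=> N0 Nlf act; have NR : 0 < N%:R :> R by rewrite ltr0n.
have [] := splits_bounds lf d_gt0 (ltn_ord c); rewrite /drift.
case: (splits d lf c) => [|n] lfn hX.
  rewrite expr0 invr1 addr0 expr1n mulr1 -(natrX R 6) ler_nat.
  apply: (leq_trans (ltnW Nlf)); apply: (@leq_trans (2 ^ d)); last by rewrite leq_exp2r.
  by rewrite leq_pexp2l //; rewrite mul0n add0n in lfn; have := ltn_ord c; lia.
have {hX} hX : (2 ^ (n * d + c) < N)%N by apply/act/hX.
set X := (2 ^ (n * d + c))%N in hX.
set t : R := 4 * X%:R / N%:R.
set A : R := N%:R / 2 ^+ (n.+1 * d).
have eX : (X%:R : R) = 2 ^+ (n * (d - 1) + c) * 2 ^+ n.
  rewrite /X natrX -exprD; congr (_ ^+ _).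
  have : (n <= n * d)%N by rewrite leq_pmulr.
  by rewrite mulnBr muln1; lia.
have -> : (2 ^+ n.+1)^-1 + 2 * 2 ^+ (n * (d - 1) + c) / N%:R = (2 ^+ n.+1)^-1 * (1 + t).
  by rewrite /t eX exprS; field; rewrite !expf_neq0 // gt_eqF.
rewrite exprMn mulrA exprVn -exprM -/A.
apply: mul_pow1D_le_six => //.
- by rewrite /A divr_gt0 // exprn_gt0.
- by rewrite /t mulr_gt0 // ?invr_gt0 // mulr_gt0 // ltr0n expn_gt0.
- by rewrite /t ltr_pdivrMr // ltr_pM2l // ltr_nat.
- rewrite /A ler_pdivrMr ?exprn_gt0 // -exprD -natrX ler_nat.
  by apply: (leq_trans (ltnW Nlf)); rewrite leq_pexp2l //; have := ltn_ord c; lia.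
have -> : A * t = 4 * X%:R / 2 ^+ (n.+1 * d).
  by rewrite /A /t; field; rewrite expf_neq0 // gt_eqF.
rewrite ler_pdivrMr ?exprn_gt0 // /X natrX.
rewrite (_ : (n.+1 * d = n * d + c + (d - c))%N); last by rewrite mulSn; have := ltn_ord c; lia.
rewrite [X in _ <= 2 * X]exprD.
have : (2 : R) <= 2 ^+ (d - c).
  by rewrite -[X in X <= _]expr1 ler_eXn2l //; [have := ltn_ord c; lia|lra].
have : (0 : R) <= 2 ^+ (n * d + c) by rewrite exprn_ge0.
move: (2 ^+ (n * d + c) : R) (2 ^+ (d - c) : R) => P Q hP hQ.
nra.
Qed.

Lemma kd_cell_near_point (m : nat) (y : d.-tuple R) : (m < N)%N -> @kd_cell R d N m N y ->
  forall c : 'I_d, `|tnth y c - tnth (digital_seq R d m.+1) c| <= 6 * N%:R `^ (- d%:R^-1).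
Proof.
move=> mN Hy c; have N0 : (0 < N)%N by apply: leq_ltn_trans mN.
have frozen : exists l, (cell_count N m l <= 1)%N by exists N; rewrite cell_countN.
have [lf Plf minlf] := ex_minnP frozen.
have act j : (j < lf)%N -> (1 < cell_count N m j)%N.
  by move=> jl; rewrite ltnNge; apply/negP => /minlf; rewrite leqNgt jl.
have Hcell : @kd_cell R d N m lf y.
  have := @kd_bounds_stable R d N m lf mN Plf (N - lf).
  by rewrite subnKC ?minlf ?cell_countN // /kd_cell => <-.
have [/andP[a0 a1] /andP[b0 b1]] := near_dyadic_active mN act c.
have /andP[x1 x2] := digital_seq_near_corner m c (splits d lf c).
have /andP[y1 y2] := Hcell c; have G0 := drift_ge0 lf c.
apply: (@le_scaled_root _ _ N) => //; last first.
  apply: le_trans (drift_radius c N0 (cell_count_le1 mN Plf) _).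
    rewrite ler_pM2l ?ltr0n // lerXn2r ?nnegrE //; first by lra.
    by rewrite ler_norml; apply/andP; split; lra.
  by move=> j /act /(cell_count_gt1 mN).
Qed.

Lemma kd_cell_sub_ball (m : nat) : (m < N)%N ->
  @kd_cell R d N m N `<=`
    cball (digital_seq R d m.+1) (6 * Num.sqrt d%:R * N%:R `^ (- d%:R^-1)).
Proof.
move=> mN y Hy; rewrite mulrAC (mulrC _ (Num.sqrt _)).
apply: cball_of_coord_bound; first by rewrite mulr_ge0 ?powR_ge0.
exact: kd_cell_near_point.
Qed.

End DyadicDrift.

Lemma bigcup_setT_ord (T : Type) (N : nat) (F : 'I_N -> set T) :
  \bigcup_(n in [set: 'I_N]) F n = \big[setU/set0]_(n < N) F n.
Proof.
rewrite -bigcup_seq; congr bigcup; apply/seteqP; split => i // _.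
exact: mem_index_enum.
Qed.

Lemma measure_setD_equipartition (dT : measure_display) (T : measurableType dT)
    (R : realType) (mu : {measure set T -> \bar R}) (N : nat) (Q : set T)
    (A : 'I_N -> set T) :
  (0 < N)%N -> measurable Q -> mu Q = 1%E -> (forall n, measurable (A n)) ->
  (forall n m, n != m -> A n `&` A m = set0) -> (forall n, A n `<=` Q) ->
  (forall n, mu (A n) = (N%:R^-1)%:E) ->
  mu (Q `\` \bigcup_(n in [set: 'I_N]) A n) = 0%E.
Proof.
move=> N0 mQ Q1 mA disA AQ muA; set U := \bigcup_(n in [set: 'I_N]) A n.
have UE : U = \big[setU/set0]_(n < N) A n by apply: bigcup_setT_ord.
have mU : measurable U by rewrite UE; apply: bigsetU_measurable.
have triv : trivIset [set: 'I_N] A.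
  move=> i j _ _ [x hx]; apply/eqP/negPn/negP => ij.
  by rewrite disA in hx.
have muU : mu U = 1%E.
  rewrite UE (measure_semi_additive_ord mu mA triv) -?UE //.
  rewrite (eq_bigr (fun _ => (N%:R^-1)%:E)) => [|i _]; last exact: muA.
  rewrite sumEFin sumr_const card_ord.
  by rewrite -[N%:R^-1 *+ N]mulr_natl mulfV // pnatr_eq0 -lt0n.
have QU : Q `&` U = U by apply/setIidr => x [n _ /AQ].
have fin : (mu Q < +oo)%E by rewrite Q1 ltry.
have QminusU : mu (Q `\` U) = (mu Q - mu (Q `&` U))%E := measureD mQ mU fin.
by rewrite QminusU QU muU Q1 subee.
Qed.

Theorem theorem1p2 (R : realType) (d : nat)
    (mu : {measure set (d.-tuple R) -> \bar R}) :
  (2 <= d)%N -> is_lebesgue_d mu ->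
  forall N : nat, (0 < N)%N ->
  exists A : 'I_N -> set (d.-tuple R),
    (forall n, measurable (A n)) /\
    (forall n m, n != m -> A n `&` A m = set0) /\
    (forall n, A n `<=` cube R d) /\
    (forall n : 'I_N, mu (A n) = (N%:R^-1)%:E) /\
    (forall n : 'I_N,
       A n `<=` cball (digital_seq R d n.+1)
                  (6 * Num.sqrt d%:R * N%:R `^ (- (d%:R^-1)))) /\
    mu (cube R d `\` \bigcup_(n in [set: 'I_N]) A n) = 0%E.
Proof.
move=> d2 Hmu N N0; have d0 : (0 < d)%N by apply: ltnW.
pose A (n : 'I_N) := @kd_cell R d N n N.
have mA n : measurable (A n) by apply: measurable_hbox.
have disA n m : n != m -> A n `&` A m = set0 by move=> nm; apply: kd_cell_disjoint.
have AQ n : A n `<=` cube R d by apply: kd_cell_sub_cube.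
have muA n : mu (A n) = (N%:R^-1)%:E.
  rewrite hbox_measure // ?kd_volume ?cell_countN ?div1r //.
  by move=> i; have [] := @kd_bounds_valid R d N n N i.
have cubeE : cube R d = box (fun _ => 0) (fun _ => 1) by [].
have muQ : mu (cube R d) = 1%E by rewrite cubeE Hmu // big1 // => i _; rewrite subr0.
exists A; do 5 (split => //); first by move=> n; apply: kd_cell_sub_ball.
apply: measure_setD_equipartition => //.
by rewrite cubeE; apply: measurable_box.
Qed.
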